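(* There is a constant $\hat C=\hat C(\alpha,\beta)$ such that for every $0\le h\in L^1(\mathbb R^d)$ and $t>0$, $$t^{-1}\int_0^t\|\psi_\tau h\|_1\,d\tau\le\hat C\,\|\psi_th\|_1.$$
   Context: Let $d\ge3$, $1<\alpha<2$, $\kappa>0$. Let $\gamma(a)=\frac{2^a\pi^{d/2}\Gamma(a/2)}{\Gamma(\frac d2-\frac a2)}$ and let $\beta\in]0,\alpha[$ be defined by $\beta\frac{d+\beta-2}{d+\beta-\alpha}\frac{\gamma(d+\beta-2)}{\gamma(d+\beta-\alpha)}=\kappa$. Let $\eta(u)=u^\beta$ for $0<u<1$, $\eta(u)=\beta u(2-\frac u2)+1-\frac32\beta$ for $1\le u\le2$, $\eta(u)=1+\frac\beta2$ for $u\ge2$, and $\psi_s(x)=\eta(s^{-1/\alpha}|x|)$ for $s>0$. *)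

From HB Require Import structures.
From mathcomp Require Import all_boot all_order all_algebra.
From mathcomp Require Import all_classical all_reals all_analysis.
Set Implicit Arguments. Unset Strict Implicit. Unset Printing Implicit Defensive.
Import Order.TTheory GRing.Theory Num.Theory.
Import numFieldNormedType.Exports.
Local Open Scope classical_set_scope.
Local Open Scope ring_scope.

Section Defs.
Variable R : realType.

Definition Gamma (a : R) : R :=
  Rintegral lebesgue_measure `]0, +oo[%classic
    (fun x : R => powR x (a - 1) * expR (- x)).

Definition gam (d : nat) (a : R) : R :=
  powR 2 a * powR pi (d%:R / 2) * Gamma (a / 2) / Gamma (d%:R / 2 - a / 2).

Definition beta_eq (d : nat) (alpha kappa beta : R) : Prop :=
  beta * ((d%:R + beta - 2) / (d%:R + beta - alpha))
    * (gam d (d%:R + beta - 2) / gam d (d%:R + beta - alpha)) = kappa.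

Definition eta (beta u : R) : R :=
  if u < 1 then powR u beta
  else if u <= 2 then beta * u * (2 - u / 2) + 1 - 3 / 2 * beta
  else 1 + beta / 2.

Definition enorm (d : nat) (x : d.-tuple R) : R :=
  Num.sqrt (\sum_(i < d) tnth x i ^+ 2).

Definition psi (alpha beta : R) (d : nat) (s : R) (x : d.-tuple R) : R :=
  eta beta (powR s (- alpha^-1) * enorm x).

(* Lebesgue integral over R^d of a function with values in \bar R,
   computed as an iterated integral w.r.t. the 1-dim Lebesgue measure
   (equal to the integral w.r.t. d-dim Lebesgue measure for
   nonnegative measurable functions, by Tonelli). *)
Fixpoint intRd (d : nat) : (d.-tuple R -> \bar R) -> \bar R :=
  match d return (d.-tuple R -> \bar R) -> \bar R with
  | 0 => fun f => f [tuple]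
  | n.+1 => fun f =>
      (\int[@lebesgue_measure R]_x intRd (fun t : n.-tuple R => f (cons_tuple x t)))%E
  end.

Definition L1norm (d : nat) (f : d.-tuple R -> R) : \bar R :=
  intRd (fun x => (`|f x|)%:E).

Definition Ioc (a b : R) : set R := `]a, b].

End Defs.

(* For tau <= t the profile psi_tau is at most 2 (t/tau)^(beta/alpha) psi_t,
   because eta is within a factor 2 of u |-> min(u, 1)^beta.  Hence the time
   average of ||psi_tau h||_1 over ]0, t] is at most 2 ||psi_t h||_1 times the
   average of (t/tau)^(beta/alpha), which is finite since beta < alpha; it is
   bounded by a geometric series, splitting ]0, t] into the dyadic intervals
   ]t/2^(k+1), t/2^k]. *)

From Pilot Require Import Defs.
From HB Require Import structures.
From mathcomp Require Import all_boot all_order all_algebra.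
From mathcomp Require Import all_classical all_reals all_analysis.
From mathcomp Require Import ring lra measurable_realfun.
Import Order.TTheory GRing.Theory Num.Theory.
Import numFieldNormedType.Exports.
Local Open Scope classical_set_scope.
Local Open Scope ring_scope.

Set Implicit Arguments. Unset Strict Implicit.

Section powR_extra.
Context (R : realType).
Implicit Types a x g : R.

Lemma powR_ge1 a x : 0 <= x -> 1 <= a -> 1 <= a `^ x.
Proof. by move=> x0 a1; rewrite -(powRr0 a) ler_powR. Qed.

Lemma ltr1_powR a x : 1 < a -> x < 1 -> a `^ x < a.
Proof.
move=> a1 x1; have a0 := lt_trans ltr01 a1.
rewrite /powR gt_eqF // -[ltRHS]lnK ?posrE // ltr_expR.
by rewrite gtr_pMl ?ln_gt0.
Qed.

Lemma powRN_inv a x : 0 <= a -> a `^ (- x) = a^-1 `^ x.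
Proof. by move=> a0; rewrite -powR_inv1 // -powRrM mulN1r. Qed.

Lemma powR_exprAC a g (n : nat) : 0 <= a -> (a ^+ n) `^ g = (a `^ g) ^+ n.
Proof.
by move=> a0; rewrite -powR_mulrn // -powRrM mulrC powRrM powR_mulrn ?powR_ge0.
Qed.

Lemma nneseries_geometric_le a x : 0 <= a -> 0 < x < 1 ->
  (\sum_(k <oo) (a * x ^+ k)%:E <= (a / (1 - x))%:E)%E.
Proof.
move=> a0 /andP[x0 x1]; apply: lime_le.
  by apply: is_cvg_ereal_nneg_natsum => k _; rewrite lee_fin mulr_ge0 ?exprn_ge0 ?(ltW x0).
apply: nearW => n; rewrite sumEFin lee_fin.
by apply: geometric_le_lim; rewrite ?ger0_norm ?(ltW x0).
Qed.

End powR_extra.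

(* Unlike [ge0_le_integral] and [ge0_integralZl], no measurability is needed
   (the integrands produced by [intRd] are not known to be measurable): the
   integral of a nonnegative function is a supremum over the simple functions
   below it. *)
Section ge0_integral_nonmeasurable.
Context d (T : measurableType d) (R : realType) (mu : {measure set T -> \bar R}).
Local Open Scope ereal_scope.
Import HBNNSimple.

Lemma ge0_le_integral_nomeas (D : set T) (f g : T -> \bar R) :
  (forall x, D x -> 0 <= f x) -> (forall x, D x -> f x <= g x) ->
  \int[mu]_(x in D) f x <= \int[mu]_(x in D) g x.
Proof.
move=> f0 fg.
have g0 x : D x -> 0 <= g x by move=> Dx; exact: le_trans (f0 _ Dx) (fg _ Dx).
rewrite !ge0_integralE//; apply: ge_ereal_sup => _ [h hf <-].
apply: ereal_sup_ubound; exists h => // x.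
exact: le_trans (hf x) (lee_restrict fg x).
Qed.

Lemma ge0_integralZl_le_nomeas (D : set T) (f : T -> \bar R) (c : R) :
  (0 < c)%R -> (forall x, D x -> 0 <= f x) ->
  \int[mu]_(x in D) (c%:E * f x) <= c%:E * \int[mu]_(x in D) f x.
Proof.
move=> c0 f0.
have cf0 x : D x -> 0 <= c%:E * f x.
  by move=> Dx; rewrite mule_ge0 ?lee_fin ?(ltW c0) ?f0.
rewrite !ge0_integralE//; apply: ge_ereal_sup => _ [h hf <-].
have ci0 : (0 <= c^-1)%R by rewrite invr_ge0 ltW.
pose h' := scale_nnsfun h ci0.
have -> : sintegral mu h = c%:E * sintegral mu h'.
  rewrite -sintegralrM; apply: eq_sintegral => x /=.
  by rewrite /h' /= mulrA divff ?mul1r ?gt_eqF.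
rewrite lee_pmul2l ?lte_fin//; apply: ereal_sup_ubound; exists h' => // x /=.
have := hf x; rewrite /patch; case: ifP => _ hfx; last first.
  by rewrite lee_fin in hfx *; exact: mulr_ge0_le0.
by rewrite -(@lee_pmul2l _ c%:E) ?lte_fin// -EFinM mulrA divff ?gt_eqF// mul1r.
Qed.

End ge0_integral_nonmeasurable.

Section iterated_integral.
Context (R : realType).
Local Open Scope ereal_scope.

Lemma intRd_ge0 d (f : d.-tuple R -> \bar R) :
  (forall x, 0 <= f x) -> 0 <= intRd f.
Proof.
elim: d f => [|n IH] f f0 /=; first exact: f0.
by apply: integral_ge0 => x _; apply: IH.
Qed.

Lemma intRd_le d (f g : d.-tuple R -> \bar R) : (forall x, 0 <= f x) ->
  (forall x, f x <= g x) -> intRd f <= intRd g.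
Proof.
elim: d f g => [|n IH] f g f0 fg /=; first exact: fg.
by apply: ge0_le_integral_nomeas => x _; [apply: intRd_ge0|apply: IH].
Qed.

Lemma intRdZl_le d (f : d.-tuple R -> \bar R) (c : R) :
  (0 < c)%R -> (forall x, 0 <= f x) ->
  intRd (fun x => c%:E * f x) <= c%:E * intRd f.
Proof.
move=> c0; elim: d f => [|n IH] f f0 //=.
set F := fun x => intRd (fun t => f (cons_tuple x t)).
apply: (@le_trans _ _ (\int[lebesgue_measure]_x (c%:E * F x))); last first.
  by apply: ge0_integralZl_le_nomeas => // x _; apply: intRd_ge0.
apply: ge0_le_integral_nomeas => x _; last exact: IH.
by apply: intRd_ge0 => t; rewrite mule_ge0 ?lee_fin ?(ltW c0).
Qed.

Lemma L1norm_le_scale d (f g : d.-tuple R -> R) (c : R) : (0 < c)%R ->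
  (forall x, `|f x| <= c * `|g x|)%R -> L1norm f <= c%:E * L1norm g.
Proof.
move=> c0 fg; rewrite /L1norm.
have g0 x : 0 <= `|g x|%:E by rewrite lee_fin.
apply: le_trans _ (intRdZl_le c0 g0).
by apply: intRd_le => x; rewrite lee_fin.
Qed.

Lemma L1norm_ge0 d (f : d.-tuple R -> R) : 0 <= L1norm f.
Proof. by apply: intRd_ge0 => x; rewrite lee_fin. Qed.

End iterated_integral.

Section eta.
Context (R : realType).
Implicit Types b c u : R.

Lemma eta_lt1 b u : u < 1 -> Defs.eta b u = u `^ b.
Proof. by rewrite /Defs.eta => ->. Qed.

(* On [1, 2] the middle branch is 1 + b/2 (u - 1)(3 - u). *)
Lemma eta_ge1 b u : 0 <= b <= 2 -> 1 <= u -> 1 <= Defs.eta b u <= 2.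
Proof.
move=> /andP[b0 b2] u1; rewrite /Defs.eta ltNge u1 /=; case: ifP => u2; last lra.
have q0 : 0 <= (u - 1) * (3 - u) by apply: mulr_ge0; lra.
have q1 : (u - 1) * (3 - u) <= 1 by nra.
by apply/andP; split; nra.
Qed.

Lemma eta_ge0 b u : 0 <= b <= 2 -> 0 <= Defs.eta b u.
Proof.
move=> hb; have [u1|u1] := ltP u 1; first by rewrite eta_lt1 ?powR_ge0.
by have /andP[+ _] := eta_ge1 hb u1; apply: le_trans.
Qed.

Lemma eta_scale_le b c u : 0 <= b <= 2 -> 1 <= c -> 0 <= u ->
  Defs.eta b (c * u) <= 2 * c `^ b * Defs.eta b u.
Proof.
move=> hb c1 u0; have b0 : 0 <= b by case/andP: hb.
have c0 : 0 <= c := le_trans ler01 c1.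
have cb1 : 1 <= c `^ b by exact: powR_ge1.
have [cu1|cu1] := ltP (c * u) 1.
  have u1 : u < 1 by nra.
  rewrite !eta_lt1 // powRM //.
  by rewrite -mulrA ler_peMl ?mulr_ge0 ?powR_ge0 ?ler1n.
have /andP[_ eta2] := eta_ge1 hb cu1.
have [u1|u1] := ltP u 1.
  rewrite [Defs.eta b u]eta_lt1 // -mulrA -powRM //.
  by have := powR_ge1 b0 cu1; lra.
by have /andP[eta1 _] := eta_ge1 hb u1; nra.
Qed.

Lemma psi_ge0 (alpha beta s : R) d (x : d.-tuple R) :
  0 <= beta <= 2 -> 0 <= psi alpha beta s x.
Proof. exact: eta_ge0. Qed.

Lemma psi_le_scale (alpha beta t tau : R) d (x : d.-tuple R) :
  0 < alpha -> 0 <= beta <= 2 -> 0 < tau <= t ->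
  psi alpha beta tau x <= 2 * (t / tau) `^ (beta / alpha) * psi alpha beta t x.
Proof.
move=> a0 hb /andP[tau0 taut]; have t0 := lt_le_trans tau0 taut.
set c := (t / tau) `^ alpha^-1.
have c1 : 1 <= c.
  by apply: powR_ge1; [rewrite invr_ge0 ltW | rewrite ler_pdivlMr // mul1r].
have tauE : tau `^ (- alpha^-1) = c * t `^ (- alpha^-1).
  rewrite !powRN_inv ?ltW // -powRM ?invr_ge0 ?divr_ge0 ?ltW //.
  by rewrite mulrAC divff ?gt_eqF // mul1r.
rewrite /psi tauE -mulrA [beta / alpha]mulrC powRrM -/c.
by apply: eta_scale_le; rewrite // mulr_ge0 ?powR_ge0 ?sqrtr_ge0.
Qed.

End eta.

Section time_average.
Context (R : realType).
Local Notation mu := (@lebesgue_measure R).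

Definition dyadic_itv (t : R) (k : nat) : set R := `]t / 2 ^+ k.+1, t / 2 ^+ k].

Lemma dyadic_itv_bigcup (t : R) : 0 < t -> \bigcup_k dyadic_itv t k = `]0, t]%classic.
Proof.
move=> t0; apply/seteqP; split => [x [k _]|x].
  rewrite /dyadic_itv /= !in_itv /= => /andP[lo hi]; apply/andP; split.
    by apply: le_lt_trans lo; rewrite divr_ge0 ?ltW ?exprn_gt0.
  apply: le_trans hi _; rewrite ler_pdivrMr ?exprn_gt0 //.
  by rewrite ler_peMr ?(ltW t0) // exprn_ege1 // ler1n.
rewrite /= in_itv /= => /andP[x0 xt].
have lo_ex : exists k, t / 2 ^+ k.+1 < x.
  exists (Num.truncn (t / x)); rewrite ltr_pdivrMr ?exprn_gt0 // mulrC.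
  rewrite -ltr_pdivrMr //; apply: lt_le_trans (truncnS_gt _) _.
  by rewrite -natrX ler_nat ltnW // ltn_expl.
case: (ex_minnP lo_ex) => k lo kmin.
exists k => //; rewrite /dyadic_itv /= in_itv /= lo /=.
case: k lo kmin => [|k] _ kmin; first by rewrite expr0 divr1.
by rewrite leNgt; apply/negP => /kmin; rewrite ltnn.
Qed.

Lemma trivIset_dyadic_itv (t : R) : 0 < t -> trivIset setT (dyadic_itv t).
Proof.
move=> t0; apply: ltn_trivIset => j k kj; apply/seteqP; split => // x [].
rewrite /dyadic_itv /= !in_itv /= => /andP[lo _] /andP[_ hi].
suff : t / 2 ^+ j <= t / 2 ^+ k.+1 by lra.
rewrite ler_pM2l // lef_pV2 ?posrE ?exprn_gt0 //.
by rewrite ler_eXn2l ?ltr1n.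
Qed.

Lemma lebesgue_measure_dyadic_itv (t : R) (k : nat) : 0 < t ->
  mu (dyadic_itv t k) = (t / 2 ^+ k.+1)%:E.
Proof.
move=> t0; rewrite lebesgue_measure_itv /= lte_fin ltr_pM2l // ltf_pV2 ?posrE ?exprn_gt0 //.
by rewrite ltr_eXn2l ?ltr1n // ltnSn -EFinD exprS; congr _%:E; field.
Qed.

Lemma integral_dyadic_itv_ratio_powR_le (t g l : R) (k : nat) :
  0 < t -> 0 <= g -> 0 <= l ->
  (\int[mu]_(tau in dyadic_itv t k) ((t / tau) `^ g * l)%:E
    <= (t * l * (2 `^ g / 2) ^+ k.+1)%:E)%E.
Proof.
move=> t0 g0 l0; have k2 : (0 < 2 ^+ k.+1 :> R) by rewrite exprn_gt0.
apply: (@le_trans _ _ (\int[mu]_(x in dyadic_itv t k) ((2 ^+ k.+1) `^ g * l)%:E)%E).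
  apply: ge0_le_integral_nomeas => [x _|x]; first by rewrite lee_fin mulr_ge0 ?powR_ge0.
  rewrite /dyadic_itv /= in_itv /= => /andP[lo _].
  have x0 : 0 < x by apply: lt_trans lo; rewrite divr_gt0.
  rewrite lee_fin ler_wpM2r //; apply: (ge0_ler_powR g0).
  - by rewrite nnegrE divr_ge0 ?ltW.
  - by rewrite nnegrE ltW.
  by rewrite ler_pdivrMr // mulrC -ler_pdivrMr // ltW.
rewrite integral_cst; last exact: measurable_itv.
rewrite [X in (_ * X)%E]lebesgue_measure_dyadic_itv //.
by rewrite -EFinM powR_exprAC // exprMn exprVn lee_fin le_eqVlt; apply/predU1l; ring.
Qed.

Lemma measurable_ratio_powR (t g : R) : 0 <= t ->
  measurable_fun `]0%R, t]%classic (fun tau : R => (t / tau) `^ g).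
Proof.
move=> t0; apply: (eq_measurable_fun (fun tau => t `^ g * tau `^ (- g))).
  move=> tau; rewrite inE /= in_itv /= => /andP[tau0 _].
  by rewrite powRN_inv ?(ltW tau0) // powRM ?invr_ge0 // ltW.
apply: measurable_funM => //; apply: measurable_funTS; exact: measurable_powR.
Qed.

Lemma integral_ratio_powR_le (t g l : R) : 0 < t -> 0 <= g < 1 -> 0 <= l ->
  (\int[mu]_(tau in `]0%R, t]%classic) ((t / tau) `^ g * l)%:E
    <= (t * l * (2 `^ g / (2 - 2 `^ g)))%:E)%E.
Proof.
move=> t0 /andP[g0 g1] l0.
have pow_lt2 : 2 `^ g < 2 by rewrite ltr1_powR ?ltr1n.
set r := 2 `^ g / 2.
have r0 : 0 < r by rewrite divr_gt0 ?powR_gt0.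
have r1 : r < 1 by rewrite ltr_pdivrMr // mul1r.
rewrite -(dyadic_itv_bigcup t0) ge0_integral_bigcup //; first last.
- exact: trivIset_dyadic_itv.
- by move=> x _; rewrite lee_fin mulr_ge0 ?powR_ge0.
- rewrite dyadic_itv_bigcup //; apply/measurable_EFinP.
  by apply: measurable_funM => //; apply: measurable_ratio_powR; rewrite ltW.
- by move=> k; exact: measurable_itv.
apply: (@le_trans _ _ (\sum_(k <oo) (t * l * r * r ^+ k)%:E)%E).
  apply: lee_nneseries => [k _ _|k _].
    by apply: integral_ge0 => x _; rewrite lee_fin mulr_ge0 ?powR_ge0.
  by rewrite -mulrA -exprS; apply: integral_dyadic_itv_ratio_powR_le.
apply: le_trans (nneseries_geometric_le _ _) _.
- by rewrite !mulr_ge0 ?(ltW t0) ?(ltW r0).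
- by rewrite r0 r1.
by rewrite /r lee_fin le_eqVlt; apply/predU1l; field; rewrite subr_eq0 gt_eqF.
Qed.

Lemma average_le_ratio_powR (t g : R) (L : \bar R) (F : R -> \bar R) :
  0 < t -> 0 <= g < 1 -> (0 <= L)%E ->
  (forall tau, 0 < tau <= t -> (0 <= F tau <= ((t / tau) `^ g)%:E * L)%E) ->
  ((t^-1)%:E * \int[mu]_(tau in `]0%R, t]%classic) F tau
    <= (2 `^ g / (2 - 2 `^ g))%:E * L)%E.
Proof.
move=> t0 g01 L0 FL; set K := 2 `^ g / (2 - 2 `^ g).
have K0 : 0 < K.
  have g1 : g < 1 by case/andP: g01.
  by rewrite divr_gt0 ?powR_gt0 // subr_gt0 ltr1_powR ?ltr1n.
case: L L0 FL => [l| |] //= L0 FL; last by rewrite gt0_muley ?leey ?lte_fin.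
rewrite lee_fin in L0.
have intF : (\int[mu]_(tau in `]0%R, t]%classic) F tau <= (t * l * K)%:E)%E.
  apply: le_trans (integral_ratio_powR_le t0 g01 L0).
  by apply: ge0_le_integral_nomeas => tau; rewrite /= in_itv /= => /FL /andP[].
apply: le_trans (lee_wpmul2l _ intF) _; first by rewrite lee_fin invr_ge0 ltW.
by rewrite -EFinM lee_fin le_eqVlt; apply/predU1l; field; rewrite gt_eqF.
Qed.

End time_average.

Theorem lemma4 (R : realType) (alpha beta : R) :
  1 < alpha < 2 -> 0 < beta < alpha ->
  exists Chat : R,
    forall (d : nat) (kappa : R), (3 <= d)%N -> 0 < kappa ->
    beta_eq d alpha kappa beta ->
    forall h : d.-tuple R -> R,
      measurable_fun setT h -> (forall x, 0 <= h x) ->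
      (L1norm h < +oo)%E ->
      forall t : R, 0 < t ->
      ((t^-1)%:E * (\int[@lebesgue_measure R]_(tau in Ioc 0 t)
                     L1norm (fun x => (psi alpha beta tau x * h x)%R))%E
       <= Chat%:E * L1norm (fun x => (psi alpha beta t x * h x)%R))%E.
Proof.
move=> /andP[a1 a2] /andP[b0 ba]; set g := beta / alpha.
have hb : 0 <= beta <= 2 by apply/andP; split; lra.
have a0 : 0 < alpha by lra.
have g01 : 0 <= g < 1.
  by rewrite /g divr_ge0 ?(ltW a0) ?(ltW b0) //= ltr_pdivrMr // mul1r.
exists (2 * (2 `^ g / (2 - 2 `^ g))) => d kappa _ _ _ h _ h0 _ t t0.
rewrite mulrC EFinM -muleA; apply: average_le_ratio_powR => //.
  by rewrite mule_ge0 ?L1norm_ge0.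
move=> tau /andP[tau0 taut]; rewrite L1norm_ge0 /= muleA -EFinM mulrC.
apply: L1norm_le_scale => [|x]; first by rewrite mulr_gt0 ?powR_gt0 ?divr_gt0.
rewrite !normrM !ger0_norm ?psi_ge0 ?h0 // mulrA ler_wpM2r //.
by apply: psi_le_scale; rewrite ?tau0 //; lra.
Qed.
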